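(* Let $n,r$ be integers with $n\ge r+2\ge 2$. For every $g\in K$ there exists a unique element $w_g\in F(X)$ representing $g$ that decomposes as $w_g=w_g^\Delta\cdot w_g^{(1)}\cdot w_g^{(2)}\cdots w_g^{(n-1)}$ with $w_g^{(i)}\in F(X^{(i)})$ for $i\in\{1,\dots,n-1\}$ and $w_g^\Delta\in[F(\Delta),F(\Delta)]$. Moreover, for $1\le i\le n-1$, the element $w_g^{(i)}(a^{(i)}_1,\dots,a^{(i)}_r)\in F^{(i)}$, obtained by substituting $a^{(i)}_j$ for $x^{(i)}_j$, equals the projection of $g$ to the factor $F^{(i)}$.
   Context: For $\alpha\in\{1,\dots,n\}$ let $F^{(\alpha)}$ be the free group on $a^{(\alpha)}_1,\dots,a^{(\alpha)}_r$, let $\psi\colon F^{(1)}\times\cdots\times F^{(n)}\to\mathbb Z^r$ send each $a^{(\alpha)}_j$ to the standard basis vector $e_j$, and $K=\ker\psi$. For $\alpha\in\{1,\dots,n-1\}$, $j\in\{1,\dots,r\}$ set $x^{(\alpha)}_j=a^{(\alpha)}_j(a^{(n)}_j)^{-1}\in K$; $X^{(\alpha)}=(x^{(\alpha)}_1,\dots,x^{(\alpha)}_r)$, $X$ the set of all $x^{(\alpha)}_j$, $\Delta=(x^{(1)}_1,x^{(2)}_2,\dots,x^{(r)}_r)$. $F(X)$, $F(X^{(\alpha)})$, $F(\Delta)$ are the abstract free groups on these letters, with $F(X^{(\alpha)}),F(\Delta)\le F(X)$, and ''represents'' refers to the natural map $F(X)\to K$. $[\cdot,\cdot]$ denotes the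 commutator subgroup. *)

From mathcomp Require Import all_boot all_order all_algebra.
Set Implicit Arguments. Unset Strict Implicit. Unset Printing Implicit Defensive.
Import GRing.Theory.

Section FreeGroup.
Variable A : eqType.

(* a letter (a, b): the generator a if b = false, its inverse if b = true *)
Definition letter := (A * bool)%type.
Definition inv_letter (l : letter) : letter := (l.1, ~~ l.2).

Fixpoint reduced (s : seq letter) : bool :=
  match s with
  | x :: ((y :: _) as t) => (y != inv_letter x) && reduced t
  | _ => true
  end.

Definition push (x : letter) (s : seq letter) : seq letter :=
  match s with
  | y :: t => if y == inv_letter x then t else x :: s
  | [::] => [:: x]
  end.

Definition reduce (s : seq letter) : seq letter := foldr push [::] s.

Lemma reduced_push x s : reduced s -> reduced (push x s).
Proof.
case: s => [|y t] //= Hs.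
case: eqP => [_|/eqP ne]; first by case: t Hs => // z u /andP [].
by rewrite /= ne Hs.
Qed.

Lemma reduced_reduce s : reduced (reduce s).
Proof. by elim: s => //= x s IH; apply: reduced_push. Qed.

Record fg := FG { fgword : seq letter; fgP : reduced fgword }.

Definition fg_one : fg := @FG [::] isT.
Definition fg_mul (u v : fg) : fg :=
  @FG (reduce (fgword u ++ fgword v)) (reduced_reduce _).
Definition fg_inv (u : fg) : fg :=
  @FG (reduce (rev (map inv_letter (fgword u)))) (reduced_reduce _).
Definition fg_gen (a : A) : fg := @FG [:: (a, false)] isT.
Definition fg_comm (u v : fg) : fg :=
  fg_mul (fg_mul (fg_inv u) (fg_inv v)) (fg_mul u v).

Definition inF (S : pred A) (w : fg) : bool :=
  all (fun l : letter => S l.1) (fgword w).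

Inductive in_comm (S : pred A) : fg -> Prop :=
  | in_comm_gen u v : inF S u -> inF S v -> in_comm S (fg_comm u v)
  | in_comm_one : in_comm S fg_one
  | in_comm_mul u v : in_comm S u -> in_comm S v -> in_comm S (fg_mul u v)
  | in_comm_inv u : in_comm S u -> in_comm S (fg_inv u).

Definition expsum (a : A) (w : fg) : int :=
  \sum_(l <- fgword w | l.1 == a) (if l.2 then (-1)%R else 1%R).

End FreeGroup.

Definition fg_subst (A B : eqType) (f : A -> fg B) (w : fg A) : fg B :=
  foldr (fun (l : letter A) acc =>
           fg_mul (if l.2 then fg_inv (f l.1) else f l.1) acc)
        (fg_one B) (fgword w).

(* Indices: paper's alpha in {1..n} is 'I_n (alpha-1); F^(n) is index n.-1.
   X = {x^(beta)_j}, beta in 'I_n.-1, j in 'I_r. *)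
Definition Xlet (n r : nat) := ('I_n.-1 * 'I_r)%type.

(* g = (g_alpha)_alpha in F^(1) x ... x F^(n) lies in K = ker psi *)
Definition inK (n r : nat) (g : 'I_n -> fg 'I_r) : Prop :=
  forall j : 'I_r, (\sum_(alpha < n) expsum j (g alpha))%R = 0%R.

(* the natural map F(X) -> K, x^(b)_j |-> a^(b)_j (a^(n)_j)^-1, component alpha *)
Definition phi (n r : nat) (w : fg (Xlet n r)) (alpha : 'I_n) : fg 'I_r :=
  fg_subst (fun x : Xlet n r =>
              if val alpha == n.-1 then fg_inv (fg_gen x.2)
              else if val x.1 == val alpha then fg_gen x.2 else fg_one _) w.

Definition represents (n r : nat) (w : fg (Xlet n r)) (g : 'I_n -> fg 'I_r) :=
  forall alpha, phi w alpha = g alpha.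

Definition inDelta (n r : nat) (x : Xlet n r) : bool := val x.1 == val x.2.
Definition inXalpha (n r : nat) (i : 'I_n.-1) (x : Xlet n r) : bool := x.1 == i.

Definition decomp (n r : nat) (w wD : fg (Xlet n r)) (ws : 'I_n.-1 -> fg (Xlet n r)) :=
  [/\ in_comm (@inDelta n r) wD,
      forall i, inF (@inXalpha n r i) (ws i)
    & w = foldl (fun acc i => fg_mul acc (ws i)) wD (enum 'I_n.-1)].

Definition eval_alpha (n r : nat) (w : fg (Xlet n r)) : fg 'I_r :=
  fg_subst (fun x : Xlet n r => fg_gen x.2) w.

(* For i < n the component map phi(-, i) kills [F(Delta), F(Delta)], whose image
   lies in the commutator subgroup of the cyclic group generated by a^(i)_i, and
   kills F(X^(k)) for k <> i, while on F(X^(i)) it is the isomorphism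
   x^(i)_j |-> a^(i)_j.  So in any decomposition w^(i) is forced to be the copy of g_i, and then
   the last component determines w^Delta, because phi(-, n) is injective on F(Delta).
   Conversely, with these copies the defect g_n (prod_i phi(w^(i), n))^-1 has zero
   exponent sums since g lies in K, hence is a product of commutators in F_r; its
   lift to F(Delta) completes the normal form. *)

From HB Require Import structures.
From mathcomp Require Import all_boot all_order all_algebra.
Set Implicit Arguments. Unset Strict Implicit. Unset Printing Implicit Defensive.
Import GRing.Theory Num.Theory.

Section Reduction.
Variable A : eqType.
Implicit Types (x : letter A) (s t : seq (letter A)).

Lemma inv_letterK : involutive (@inv_letter A).
Proof. by case=> a b; rewrite /inv_letter /= negbK. Qed.

Lemma push_invK x t : reduced t -> push x (push (inv_letter x) t) = t.
Proof.
case: t => [|y t] /=; first by rewrite eqxx.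
rewrite inv_letterK; case: eqP => [->|_] /=; last by rewrite eqxx.
by case: t => [|z t] //= /andP[/negbTE ->].
Qed.

Lemma reduce_id s : reduced s -> reduce s = s.
Proof.
elim: s => // x s IH red_xs /=; rewrite IH; last by case: s red_xs {IH} => // y s /andP[].
by case: s red_xs {IH} => // y s /andP[/negbTE /= ->].
Qed.

Lemma reduce_catr s t : reduce (s ++ t) = reduce (s ++ reduce t).
Proof.
by rewrite /reduce !foldr_cat -/(reduce t) -/(reduce (reduce t)) (reduce_id (reduced_reduce t)).
Qed.

Lemma reduce_catl s t : reduce (s ++ t) = reduce (reduce s ++ t).
Proof.
rewrite reduce_catr [RHS]reduce_catr; elim: s => //= x s ->.
case: (reduce s) => [|y s'] //=.
by case: eqP => [->|_] //=; rewrite push_invK ?reduced_reduce.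
Qed.

Lemma reduce_cancel s x t : reduce (s ++ x :: inv_letter x :: t) = reduce (s ++ t).
Proof. by rewrite reduce_catr [RHS]reduce_catr /= push_invK ?reduced_reduce. Qed.

Lemma reduce_invl s : reduce (rev (map (@inv_letter A) s) ++ s) = [::].
Proof.
elim: s => // x s IH; rewrite map_cons rev_cons -cats1 -catA /=.
by rewrite -{2}(inv_letterK x) reduce_cancel.
Qed.

Lemma inv_letter_neq x : inv_letter x != x.
Proof. by case: x => a b; rewrite /inv_letter xpair_eqE /=; case: b; rewrite andbF. Qed.

Lemma same_letter x y : y.1 = x.1 -> y != inv_letter x -> y = x.
Proof. by case: x y => a b [a' b'] /= ->; case: b b' => [] [] //=; rewrite eqxx. Qed.

Lemma reduced_single_letter x s :
  reduced (x :: s) -> all (fun y => y.1 == x.1) s -> all (pred1 x) s.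
Proof.
elim: s x => // y s IH x /= /andP[yx red_ys] /andP[/eqP y1x s1x].
have yx_eq := same_letter y1x yx; subst y.
by rewrite eqxx; apply: IH.
Qed.

End Reduction.

Section FreeGroupStructure.
Variable A : eqType.
Implicit Types (x : letter A) (s t : seq (letter A)) (u v w : fg A).

Definition fg_of s : fg A := FG (reduced_reduce s).

Lemma fgword_inj : injective (@fgword A).
Proof. by case=> s p [t q] /= st; subst t; rewrite (bool_irrelevance p q). Qed.

Lemma fgwordK u : fg_of (fgword u) = u.
Proof. by apply: fgword_inj; rewrite /= reduce_id ?fgP. Qed.

Lemma fg_of_cat s t : fg_mul (fg_of s) (fg_of t) = fg_of (s ++ t).
Proof. by apply: fgword_inj; rewrite /= -reduce_catl -reduce_catr. Qed.

Lemma fg_mulA : associative (@fg_mul A).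
Proof. by move=> u v w; rewrite -(fgwordK u) -(fgwordK v) -(fgwordK w) !fg_of_cat catA. Qed.

Lemma fg_mul1g : left_id (fg_one A) (@fg_mul A).
Proof. by move=> u; apply: fgword_inj; rewrite /= reduce_id ?fgP. Qed.

Lemma fg_mulg1 : right_id (fg_one A) (@fg_mul A).
Proof. by move=> u; apply: fgword_inj; rewrite /= cats0 reduce_id ?fgP. Qed.

Lemma fg_mulVg : left_inverse (fg_one A) (@fg_inv A) (@fg_mul A).
Proof. by move=> u; apply: fgword_inj; rewrite /= -reduce_catl reduce_invl. Qed.

Lemma fg_mulgV : right_inverse (fg_one A) (@fg_inv A) (@fg_mul A).
Proof.
move=> u; apply: fgword_inj; rewrite /= -reduce_catr.
have invK : rev (map (@inv_letter A) (rev (map (@inv_letter A) (fgword u)))) = fgword u.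
  by rewrite map_rev revK (mapK (@inv_letterK A)).
by rewrite -{1}invK reduce_invl.
Qed.

End FreeGroupStructure.

HB.instance Definition _ (A : eqType) := [isSub for @fgword A].
HB.instance Definition _ (A : eqType) := [Equality of fg A by <:].
HB.instance Definition _ (A : choiceType) := [Choice of fg A by <:].
HB.instance Definition _ (A : choiceType) :=
  isGroup.Build (fg A) (@fg_mulA A) (@fg_mul1g A) (@fg_mulg1 A) (@fg_mulVg A) (@fg_mulgV A).

Local Open Scope group_scope.

Section FreeGroupTheory.
Variable A : choiceType.
Implicit Types (a : A) (x : letter A) (s t : seq (letter A)) (u v : fg A) (S : pred A).

Lemma fg_mulE u v : fg_mul u v = u * v. Proof. by []. Qed.
Lemma fg_invE u : fg_inv u = u^-1. Proof. by []. Qed.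
Lemma fg_oneE : fg_one A = 1. Proof. by []. Qed.
Lemma fg_commE u v : fg_comm u v = [~ u, v].
Proof. exact: esym (mulgA u^-1 v^-1 (u * v)). Qed.

Definition fgE := (fg_commE, fg_mulE, fg_invE, fg_oneE).

Lemma fg_of_nil : fg_of [::] = 1 :> fg A. Proof. exact: fgword_inj. Qed.

Definition letter_img (G : groupType) (f : A -> G) x : G :=
  if x.2 then (f x.1)^-1 else f x.1.

Lemma letter_img_inv_letter (G : groupType) (f : A -> G) x :
  letter_img f (inv_letter x) = (letter_img f x)^-1.
Proof. by rewrite /letter_img /=; case: x.2; rewrite ?invgK. Qed.

Lemma letter_imgV (G : groupType) (f : A -> G) x :
  letter_img (fun a => (f a)^-1) x = (letter_img f x)^-1.
Proof. by rewrite /letter_img; case: x.2. Qed.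

Lemma fg_of_cons x s : fg_of (x :: s) = letter_img (@fg_gen A) x * fg_of s.
Proof. by rewrite -cat1s -fg_of_cat; congr (_ * _); case: x => a []; apply: fgword_inj. Qed.

Lemma prod_letter_img_reduce (G : groupType) (f : A -> G) s :
  \prod_(x <- reduce s) letter_img f x = \prod_(x <- s) letter_img f x.
Proof.
elim: s => // x s IH; rewrite big_cons -IH [reduce _]/=.
case: (reduce s) => [|y t] /=; first by rewrite !big_cons.
case: eqP => [->|_]; last by rewrite !big_cons.
by rewrite big_cons letter_img_inv_letter mulgA mulgV mul1g.
Qed.

Section Substitution.
Variable B : choiceType.
Implicit Types f : A -> fg B.

Lemma fg_substE f u : fg_subst f u = \prod_(x <- fgword u) letter_img f x.
Proof. by rewrite /fg_subst; elim: (fgword u) => [|x s /= ->]; rewrite ?big_nil ?big_cons. Qed.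

Lemma fg_substM f u v : fg_subst f (u * v) = fg_subst f u * fg_subst f v.
Proof. by rewrite !fg_substE /= prod_letter_img_reduce big_cat. Qed.

Lemma fg_subst1 f : fg_subst f 1 = 1. Proof. by []. Qed.

Lemma fg_subst_gen f a : fg_subst f (fg_gen a) = f a.
Proof. by rewrite fg_substE big_seq1. Qed.

Lemma eq_fg_subst_inF f S (f' : A -> fg B) u :
  inF S u -> {in S, f =1 f'} -> fg_subst f u = fg_subst f' u.
Proof.
move=> /allP Su ff'; rewrite !fg_substE; apply: eq_big_seq => x /Su Sx.
by rewrite /letter_img ff'.
Qed.

Lemma eq_fg_subst f (f' : A -> fg B) : f =1 f' -> fg_subst f =1 fg_subst f'.
Proof. by move=> ff' u; apply: (@eq_fg_subst_inF f predT) => [|a _]; [apply/allP|]. Qed.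

End Substitution.

End FreeGroupTheory.

HB.instance Definition _ (A B : choiceType) (f : A -> fg B) :=
  isMultiplicative.Build (fg A) (fg B) (fg_subst f) (fg_substM f).
HB.instance Definition _ (A B : choiceType) (f : A -> fg B) :=
  Multiplicative_isUMagmaMorphism.Build (fg A) (fg B) (fg_subst f) (fg_subst1 f).

Section FreeGroupMorphisms.
Variable A : choiceType.
Implicit Types (u : fg A).

Lemma fg_subst_gen_id u : fg_subst (@fg_gen A) u = u.
Proof.
rewrite fg_substE -[RHS]fgwordK; elim: (fgword u) => [|x s IH].
  by rewrite big_nil fg_of_nil.
by rewrite big_cons IH fg_of_cons.
Qed.

Lemma fg_subst_comp (B C : choiceType) (f : A -> fg B) (h : B -> fg C) u :
  fg_subst h (fg_subst f u) = fg_subst (fun a => fg_subst h (f a)) u.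
Proof.
rewrite [fg_subst f u]fg_substE gmulf_prod fg_substE; apply: eq_bigr => x _.
by rewrite /letter_img; case: x.2; rewrite ?gmulfV.
Qed.

Lemma fg_subst_const1 (B : choiceType) u : fg_subst (fun _ : A => 1 : fg B) u = 1.
Proof. by rewrite fg_substE big1 // => x _; rewrite /letter_img invg1; case: x.2. Qed.

End FreeGroupMorphisms.

Section Subgroups.
Variable A : choiceType.
Implicit Types (a : A) (x : letter A) (s : seq (letter A)) (u v : fg A) (S : pred A).

Lemma all_push (P : pred (letter A)) x s : P x -> all P s -> all P (push x s).
Proof.
case: s => [|y t] /=; first by move=> ->.
by move=> Px /andP[Py Pt]; case: eqP => _ //=; rewrite Px Py.
Qed.

Lemma all_reduce (P : pred (letter A)) s : all P s -> all P (reduce s).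
Proof. by elim: s => //= x s IH /andP[Px /IH]; apply: all_push. Qed.

Lemma inF_mul S u v : inF S u -> inF S v -> inF S (u * v).
Proof. by move=> Su Sv; apply: all_reduce; rewrite all_cat; apply/andP. Qed.

Lemma inF_inv S u : inF S u -> inF S u^-1.
Proof. by move=> Su; apply: all_reduce; rewrite all_rev all_map. Qed.

Lemma inF_gen S a : S a -> inF S (fg_gen a).
Proof. by rewrite /inF /= => ->. Qed.

Lemma in_comm_inF S u : in_comm S u -> inF S u.
Proof.
elim=> {u} [u v Su Sv||u v _ Su _ Sv|u _ Su] //; last exact: inF_inv.
  by do 2?apply: inF_mul => //; apply: inF_inv.
exact: inF_mul.
Qed.

End Subgroups.

Lemma inF_letter_img (A B : choiceType) (S' : pred B) (f : A -> fg B) x :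
  inF S' (f x.1) -> inF S' (letter_img f x).
Proof. by rewrite /letter_img; case: x.2 => //; apply: inF_inv. Qed.

Lemma inF_fg_subst (A B : choiceType) (S : pred A) (S' : pred B) (f : A -> fg B) u :
  inF S u -> {in S, forall a, inF S' (f a)} -> inF S' (fg_subst f u).
Proof.
move=> /allP Su fS; rewrite fg_substE big_seq.
apply: (big_ind (inF S')) => //; first exact: inF_mul.
by move=> x /Su /fS /inF_letter_img.
Qed.

Section ExponentSums.
Variable A : choiceType.
Implicit Types (a : A) (x : letter A) (s t p q : seq (letter A)) (u v : fg A).
Local Open Scope ring_scope.

Definition letter_sign x : int := if x.2 then -1 else 1.

Definition expsum_seq a s : int := \sum_(x <- s | x.1 == a) letter_sign x.

Lemma expsumE a u : expsum a u = expsum_seq a (fgword u). Proof. by []. Qed.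

Lemma expsum_seq_cat a s t : expsum_seq a (s ++ t) = expsum_seq a s + expsum_seq a t.
Proof. exact: big_cat. Qed.

Lemma expsum_seq_cons a x s :
  expsum_seq a (x :: s) = (if x.1 == a then letter_sign x else 0) + expsum_seq a s.
Proof. by rewrite /expsum_seq big_cons; case: ifP; rewrite ?add0r. Qed.

Lemma letter_sign_pair a x :
  (if x.1 == a then letter_sign x else 0) +
  (if x.1 == a then letter_sign (inv_letter x) else 0) = 0.
Proof. by case: ifP => _; rewrite ?addr0 // /letter_sign /=; case: x.2. Qed.

Lemma expsum_seq_reduce a s : expsum_seq a (reduce s) = expsum_seq a s.
Proof.
elim: s => // x s IH; rewrite expsum_seq_cons -IH [reduce _]/=.
case: (reduce s) => [|y t] /=; first by rewrite expsum_seq_cons.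
case: (eqVneq y (inv_letter x)) => [->|_]; last by rewrite expsum_seq_cons.
by rewrite expsum_seq_cons addrA letter_sign_pair add0r.
Qed.

Lemma expsum_seq_noinv x s :
  inv_letter x \notin s -> expsum_seq x.1 s = (letter_sign x *+ count_mem x s)%R.
Proof.
elim: s => [|y s IH]; first by rewrite /expsum_seq big_nil.
rewrite in_cons negb_or eq_sym => /andP[y_x /IH {}IH]; rewrite expsum_seq_cons IH /=.
case: (eqVneq y.1 x.1) => [yx|nyx]; first by rewrite (same_letter yx) // eqxx mulrS.
by rewrite add0r; case: (eqVneq y x) nyx => [->|_]; rewrite ?eqxx.
Qed.

Lemma expsum_seq_cons_neq0 x s : inv_letter x \notin s -> expsum_seq x.1 (x :: s) != 0%R.
Proof.
move=> x's; rewrite expsum_seq_cons eqxx expsum_seq_noinv // -mulrS.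
by rewrite /letter_sign; case: x.2; rewrite ?mulNrn ?oppr_eq0 pnatr_eq0.
Qed.

Lemma expsum_seq_cancel_pair a x p q :
  expsum_seq a (x :: p ++ inv_letter x :: q) = expsum_seq a (p ++ q).
Proof.
rewrite expsum_seq_cons !expsum_seq_cat expsum_seq_cons addrCA; congr (_ + _)%R.
by rewrite addrA [(inv_letter x).1]/= letter_sign_pair add0r.
Qed.

Lemma expsumM a u v : expsum a (u * v)%g = expsum a u + expsum a v.
Proof. by rewrite expsumE expsum_seq_reduce expsum_seq_cat. Qed.

Lemma expsum1 a : expsum a 1%g = 0. Proof. exact: big_nil. Qed.

Lemma expsumV a u : expsum a u^-1%g = - expsum a u.
Proof. by apply/eqP; rewrite -addr_eq0 -expsumM mulVg expsum1. Qed.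

Lemma expsum_prod a I r (F : I -> fg A) :
  expsum a (\prod_(i <- r) F i)%g = \sum_(i <- r) expsum a (F i).
Proof. exact: (big_morph _ (expsumM a) (expsum1 a)). Qed.

Lemma expsum_subst_invg a u :
  expsum a (fg_subst (fun b => (fg_gen b)^-1)%g u) = - expsum a u.
Proof.
rewrite -[u in RHS]fg_subst_gen_id !fg_substE !expsum_prod -sumrN.
by apply: eq_bigr => x _; rewrite letter_imgV expsumV.
Qed.

End ExponentSums.

Section CommutatorSubgroup.
Variable A : choiceType.
Implicit Types (a : A) (x : letter A) (s p q : seq (letter A)) (u v : fg A) (S : pred A).

Lemma in_comm_expsum S u a : in_comm S u -> expsum a u = 0%R.
Proof.
elim=> {u} [u v _ _||u v _ Hu _ Hv|u _ Hu]; rewrite ?fgE ?expsum1 //.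
- by rewrite !expsumM !expsumV addrCA addKr addNr.
- by rewrite expsumM Hu Hv addr0.
- by rewrite expsumV Hu oppr0.
Qed.

Lemma in_comm_fg_subst (B : choiceType) S (S' : pred B) (f : A -> fg B) u :
  {in S, forall a, inF S' (f a)} -> in_comm S u -> in_comm S' (fg_subst f u).
Proof.
move=> fS; elim=> {u} [u v Su Sv||u v _ Hu _ Hv|u _ Hu]; rewrite ?fgE.
- by rewrite gmulfR -fg_commE; apply: in_comm_gen; apply: inF_fg_subst fS.
- by rewrite gmulf1; apply: in_comm_one.
- by rewrite gmulfM; apply: in_comm_mul.
- by rewrite gmulfV; apply: in_comm_inv.
Qed.






Lemma inF_subsingleton_expsum0 S u :
  {in S &, forall a b, a = b} -> inF S u -> (forall a, expsum a u = 0%R) -> u = 1.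
Proof.
case: u => [[|x s] red_xs] S1; first by move=> *; apply: fgword_inj.
rewrite /inF /= => /andP[Sx Ss] u0.
have /reduced_single_letter s_x : all (fun y => y.1 == x.1) s.
  by apply/allP => y /(allP Ss) Sy; rewrite (S1 _ _ Sy Sx).
have x's : inv_letter x \notin s.
  by apply/negP => /(allP (s_x red_xs)); rewrite /= (negbTE (inv_letter_neq x)).
by have := expsum_seq_cons_neq0 x's; rewrite -[expsum_seq _ _]/(expsum x.1 (FG red_xs)) u0 eqxx.
Qed.

Lemma in_comm_subsingleton S u : {in S &, forall a b, a = b} -> in_comm S u -> u = 1.
Proof.
move=> S1 Su; apply: inF_subsingleton_expsum0 S1 (in_comm_inF Su) _ => a.
exact: in_comm_expsum Su.
Qed.

Lemma fg_of_cancel_pair x p q :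
  fg_of (x :: p ++ inv_letter x :: q) =
    [~ (letter_img (@fg_gen A) x)^-1, (fg_of p)^-1] * fg_of (p ++ q).
Proof.
rewrite -fg_of_cat fg_of_cons -fg_of_cat fg_of_cons letter_img_inv_letter.
by rewrite /commg /conjg !invgK !mulgA mulgVK.
Qed.


Lemma in_comm_fg_of S s :
  all (fun x => S x.1) s -> (forall a, expsum_seq a s = 0%R) -> in_comm S (fg_of s).
Proof.
have [m] := ubnP (size s); elim: m s => // m IH [_ _ _|x s].
  by rewrite fg_of_nil; apply: in_comm_one.
move=> /= size_s /andP[Sx Ss] s0.
have x's : inv_letter x \in s by apply/negPn/negP => /expsum_seq_cons_neq0; rewrite s0 eqxx.
move: size_s Ss s0; case/splitPr: x's => p q size_s; rewrite all_cat /= => /and3P[Sp _ Sq] s0.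
rewrite fg_of_cancel_pair -fg_commE; apply: in_comm_mul.
  by apply: in_comm_gen; apply: inF_inv; [apply/inF_letter_img/inF_gen | apply: all_reduce].
apply: IH; first by move: size_s; rewrite !size_cat /= addnS ltnS => /ltnW.
  by rewrite all_cat Sp.
by move=> a; rewrite -(expsum_seq_cancel_pair a x).
Qed.

Lemma in_comm_of_expsum0 S u : inF S u -> (forall a, expsum a u = 0%R) -> in_comm S u.
Proof. by move=> Su u0; rewrite -[u]fgwordK; apply: in_comm_fg_of Su u0. Qed.

End CommutatorSubgroup.

Lemma foldl_mulg (G : monoidType) (I : Type) (F : I -> G) x s :
  foldl (fun y i => y * F i) x s = x * \prod_(i <- s) F i.
Proof.
elim: s x => [|i s IH] x /=; first by rewrite big_nil mulg1.
by rewrite IH big_cons mulgA.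
Qed.

Section Decomposition.
Variables (n' r : nat) (le_rn : r <= n').
Local Notation n := n'.+1.
Local Notation X := (Xlet n r).
Implicit Types (w u wD : fg X) (t : fg 'I_r) (ws : 'I_n' -> fg X) (g : 'I_n -> fg 'I_r).

Definition wid (i : 'I_n') : 'I_n := widen_ord (leqnSn n') i.
Definition delta (j : 'I_r) : X := (widen_ord le_rn j, j).
Definition copy (i : 'I_n') t : fg X := fg_subst (fun j => fg_gen ((i, j) : X)) t.
(* phi(x^(j)_j, n) = (a^(n)_j)^-1, hence the inverses: lift_delta inverts phi(-, n) on F(Delta). *)
Definition lift_delta t : fg X := fg_subst (fun j => (fg_gen (delta j))^-1) t.

Lemma phi_ord_max w : phi w ord_max = fg_subst (fun x : X => (fg_gen x.2)^-1) w.
Proof. by apply: eq_fg_subst => x /=; rewrite eqxx. Qed.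

Lemma phi_wid w i :
  phi w (wid i) = fg_subst (fun x : X => if x.1 == i then fg_gen x.2 else 1) w.
Proof. by apply: eq_fg_subst => x /=; rewrite (ltn_eqF (ltn_ord i)). Qed.

Lemma phi_wid_in_comm_Delta u i : in_comm (@inDelta n r) u -> phi u (wid i) = 1.
Proof.
move=> Du; rewrite phi_wid.
apply: (@in_comm_subsingleton _ [pred j : 'I_r | val j == val i]).
  by move=> a b /eqP ai /eqP bi; apply: val_inj; rewrite ai bi.
apply: in_comm_fg_subst Du => -[k j] /eqP /= kj.
by case: eqP => [ki|_] //; apply: inF_gen; rewrite /= -kj ki.
Qed.

Lemma phi_wid_Xalpha u k i :
  inF (@inXalpha n r k) u -> phi u (wid i) = if k == i then eval_alpha u else 1.
Proof.
move=> Ku; rewrite phi_wid; case: eqP => [<-|ki].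
  by apply: (eq_fg_subst_inF (S := @inXalpha n r k)) => // x /eqP ->; rewrite eqxx.
rewrite -[RHS](fg_subst_const1 _ u).
apply: (eq_fg_subst_inF (S := @inXalpha n r k)) => // x /eqP ->.
by case: eqP ki.
Qed.

Lemma eval_alpha_copy i t : eval_alpha (copy i t) = t.
Proof.
rewrite /eval_alpha fg_subst_comp -[RHS]fg_subst_gen_id.
by apply: eq_fg_subst => j; rewrite fg_subst_gen.
Qed.

Lemma copy_eval_alpha i u : inF (@inXalpha n r i) u -> copy i (eval_alpha u) = u.
Proof.
move=> Iu; rewrite /copy /eval_alpha fg_subst_comp -[RHS]fg_subst_gen_id.
by apply: (eq_fg_subst_inF (S := @inXalpha n r i)) => // -[k j] /eqP /= ->; rewrite fg_subst_gen.
Qed.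

Lemma phi_last_copy i t : phi (copy i t) ord_max = fg_subst (fun j => (fg_gen j)^-1) t.
Proof.
by rewrite phi_ord_max /copy fg_subst_comp; apply: eq_fg_subst => j; rewrite fg_subst_gen.
Qed.

Lemma phi_last_lift_delta t : phi (lift_delta t) ord_max = t.
Proof.
rewrite phi_ord_max /lift_delta fg_subst_comp -[RHS]fg_subst_gen_id.
by apply: eq_fg_subst => j; rewrite gmulfV /= fg_subst_gen invgK.
Qed.

Lemma lift_delta_phi_last u : inF (@inDelta n r) u -> lift_delta (phi u ord_max) = u.
Proof.
move=> Du; rewrite phi_ord_max /lift_delta fg_subst_comp -[RHS]fg_subst_gen_id.
apply: (eq_fg_subst_inF (S := @inDelta n r)) => // -[k j] /eqP /= kj.
rewrite gmulfV /= fg_subst_gen invgK.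
by rewrite /delta; congr (fg_gen (_, _)); apply: val_inj; rewrite /= kj.
Qed.

Lemma in_comm_lift_delta t : in_comm predT t -> in_comm (@inDelta n r) (lift_delta t).
Proof. by apply: (in_comm_fg_subst (S' := @inDelta n r)) => j _; apply/inF_inv/inF_gen/eqP. Qed.

Lemma decompE w wD ws : decomp w wD ws -> w = wD * \prod_(i <- enum 'I_n') ws i.
Proof. by case=> _ _ ->; apply: foldl_mulg. Qed.

Lemma phi_decomp w wD ws alpha : decomp w wD ws ->
  phi w alpha = phi wD alpha * \prod_(i <- enum 'I_n') phi (ws i) alpha.
Proof. by move/decompE ->; rewrite /phi gmulfM gmulf_prod. Qed.

Lemma phi_decomp_wid w wD ws i : decomp w wD ws -> phi w (wid i) = eval_alpha (ws i).
Proof.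
move=> dec; have [Dw Xws _] := dec.
rewrite (phi_decomp _ dec) (phi_wid_in_comm_Delta _ Dw) mul1g.
under eq_bigr do rewrite (phi_wid_Xalpha _ (Xws _)).
by rewrite -big_mkcond -big_filter filter_pred1_uniq ?enum_uniq ?mem_enum // big_seq1.
Qed.

Definition normal_comp g i : fg X := copy i (g (wid i)).

Definition normal_delta g : fg X :=
  lift_delta (g ord_max / \prod_(i <- enum 'I_n') fg_subst (fun j => (fg_gen j)^-1) (g (wid i))).

Definition normal_word g : fg X := normal_delta g * \prod_(i <- enum 'I_n') normal_comp g i.

Lemma decomp_normal_comp w wD ws g i :
  represents w g -> decomp w wD ws -> ws i = normal_comp g i.
Proof.
move=> wg dec; have [_ Xws _] := dec.
by rewrite /normal_comp -(wg (wid i)) (phi_decomp_wid _ dec) (copy_eval_alpha (Xws i)).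
Qed.

Lemma decomp_normal_delta w wD ws g :
  represents w g -> decomp w wD ws -> wD = normal_delta g.
Proof.
move=> wg dec; have [DwD _ _] := dec.
rewrite -(lift_delta_phi_last (in_comm_inF DwD)) /normal_delta; congr lift_delta.
rewrite -(wg ord_max) (phi_decomp _ dec).
under eq_bigr do rewrite (decomp_normal_comp _ wg dec) phi_last_copy.
by rewrite mulgK.
Qed.

Lemma decomp_normal_word w wD ws g :
  represents w g -> decomp w wD ws -> w = normal_word g.
Proof.
move=> wg dec; rewrite (decompE dec) (decomp_normal_delta wg dec).
by under eq_bigr do rewrite (decomp_normal_comp _ wg dec).
Qed.

Lemma in_comm_normal_delta g : inK g -> in_comm (@inDelta n r) (normal_delta g).
Proof.
move=> Kg; apply/in_comm_lift_delta/in_comm_of_expsum0 => [|j]; first exact/allP.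
rewrite expsumM expsumV expsum_prod.
under eq_bigr do rewrite expsum_subst_invg.
by rewrite sumrN opprK -[RHS](Kg j) big_ord_recr addrC big_enum.
Qed.

Lemma decomp_normal g : inK g -> decomp (normal_word g) (normal_delta g) (normal_comp g).
Proof.
move=> Kg; split; [exact: in_comm_normal_delta | move=> i | exact: esym (foldl_mulg _ _ _)].
by apply: (inF_fg_subst (S := predT)) => [|j _]; [apply/allP | apply/inF_gen/eqP].
Qed.

Lemma represents_normal_word g : inK g -> represents (normal_word g) g.
Proof.
move=> Kg alpha; have dec := decomp_normal Kg.
case: (unliftP ord_max alpha) => [i ->|->].
  have -> : lift ord_max i = wid i by apply/val_inj/lift_max.
  by rewrite (phi_decomp_wid _ dec) eval_alpha_copy.
rewrite (phi_decomp _ dec) phi_last_lift_delta.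
by under [X in _ * X]eq_bigr do rewrite /normal_comp phi_last_copy; rewrite mulgVK.
Qed.

End Decomposition.

Theorem lemma3p6 (n r : nat) (hnr : r.+2 <= n) (g : 'I_n -> fg 'I_r) :
  inK g ->
  [/\ exists w, represents w g /\ exists wD ws, decomp w wD ws,
      forall w w' : fg (Xlet n r),
        represents w g -> (exists wD ws, decomp w wD ws) ->
        represents w' g -> (exists wD ws, decomp w' wD ws) -> w = w'
    & forall (w wD : fg (Xlet n r)) (ws : 'I_n.-1 -> fg (Xlet n r)),
        represents w g -> decomp w wD ws ->
        forall i : 'I_n.-1, eval_alpha (ws i) = g (widen_ord (leq_pred n) i)].
Proof.
case: n hnr g => [|n'] // hnr g Kg; have le_rn : r <= n' := ltnW hnr.
split.
- exists (normal_word le_rn g); split; first exact: represents_normal_word.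
  by exists (normal_delta le_rn g), (normal_comp g); apply: decomp_normal.
- move=> w w' wg [wD [ws dec]] w'g [wD' [ws' dec']].
  by rewrite (decomp_normal_word le_rn wg dec) (decomp_normal_word le_rn w'g dec').
- move=> w wD ws wg dec i.
  have -> : widen_ord (leq_pred n'.+1) i = wid i by apply: val_inj.
  by rewrite -(wg (wid i)) (phi_decomp_wid _ dec).
Qed.
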